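(* Let $\Phi=\forall u_1\ldots\forall u_n\exists e_1(D_1)\ldots\exists e_m(D_m).\varphi$ be a DQBF with prefix $\mathcal{Q}$, let $A$ be a set of arbiter variables, let $\psi$ be a CNF with $\mathit{var}(\psi)\subseteq U\cup E\cup A$, and let $\neg p\vee\ell$ be a forcing clause for the existential literal $\ell$ in $\psi$. Then there is no model $F$ of $\mathcal{Q}\exists A(\emptyset).\psi$ such that both (i) for every arbiter literal $a$ in $p$, the (constant) model function $F_{\mathit{var}(a)}$ satisfies $a$, and (ii) for some $\sigma\in[D(\mathit{var}(\ell))]$ with $\sigma\models p|_U$, the value $F_{\mathit{var}(\ell)}(\sigma)$ satisfies $\neg\ell$.
   Context: For a set $V$ of variables, $[V]$ is the set of assignments $V\to\{\textsc{true},\textsc{false}\}$; assignments are identified with terms of the literals they make true, $\neg\sigma$ is the clause of the negations of these literals, and $\sigma|_W$ denotes restriction to (the part of the domain lying in) $W$. A DQBF is $\forall u_1\ldots\forall u_n\exists e_1(D_1)\ldots\exists e_m(D_m).\varphi$ with pairwise distinct variables, $U=\{u_i\}$, $E=\{e_j\}$, dependency sets $D(e_j)=D_j\subseteq U$, and $\varphi$ a CNF over $U\cup E$; a model is a family $F=(F_e)_{e}$ with $F_e:[D(e)]\to\{\textsc{true},\textsc{false}\}$ such that for every $\sigma\in[U]$, $\sigma\cup F(\sigma)$ satisfies the matrix, where $F(\sigma)$ assigns each existential $e$ the value $F_e(\sigma|_{D(e)})$. Arbiter variables are fresh variables $e^\sigma$ for $e\in E$, $\sigma\in[D(e)]$.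 For a set $A$ of them and a CNF $\psi$, $\mathcal{Q}\exists A(\emptyset).\psi$ is the DQBF whose prefix is that of $\Phi$ extended by every variable of $A$ as an existential variable with empty dependency set, and whose matrix is $\psi$. Forcing: let $\ell$ be a literal on a variable in $E$, $\psi$ a formula with $\mathit{var}(\psi)\subseteq U\cup E\cup A$, and $\sigma$ a partial assignment to $U\cup A$; $\ell$ is forced by $\sigma$ in $\psi$ if $\psi\wedge\sigma\wedge\neg\ell$ is unsatisfiable, and in that case $\neg(\sigma|_{D(\mathit{var}(\ell))\cup A})\vee\ell$ is called a forcing clause (for $\ell$ in $\psi$). *)

From mathcomp Require Import all_boot.
Set Implicit Arguments. Unset Strict Implicit. Unset Printing Implicit Defensive.

Section DQBF.
Variable V : finType.  (* the original (universal / existential) variables *)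

(* Literals over a variable type X: (x, true) is x, (x, false) is ~x. *)
Definition lit (X : Type) := (X * bool)%type.
Definition clause (X : Type) := seq (lit X).
Definition cnf (X : Type) := seq (clause X).

Definition lit_sat (X : Type) (al : X -> bool) (l : lit X) : bool := al l.1 == l.2.
Definition clause_sat (X : Type) (al : X -> bool) (C : clause X) : bool :=
  has (lit_sat al) C.
Definition cnf_sat (X : Type) (al : X -> bool) (f : cnf X) : bool :=
  all (clause_sat al) f.
Definition cnf_vars_in (X : Type) (f : cnf X) (P : X -> bool) : bool :=
  all (fun C => all (fun l : lit X => P l.1) C) f.

Record dqbf := DQBF {
  univ : {set V};
  exist : {set V};
  dep : V -> {set V};
  matrix : cnf V }.

Definition dqbf_wf (Phi : dqbf) : Prop :=
  [disjoint univ Phi & exist Phi] /\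
  (forall e, e \in exist Phi -> dep Phi e \subset univ Phi) /\
  cnf_vars_in (matrix Phi) (fun v => v \in univ Phi :|: exist Phi).

(* Arbiter variable e^sigma, sigma in [D(e)]: encoded as the pair (e, s) where
   s \subset D(e) is the set of variables that sigma makes true. *)
Definition avar := (V * {set V})%type.
Definition arbiters_of (Phi : dqbf) (A : {set avar}) : Prop :=
  forall a, a \in A -> a.1 \in exist Phi /\ a.2 \subset dep Phi a.1.

(* Variables of formulas over U, E, A: original variables or arbiter variables
   (arbiter variables are fresh by construction). *)
Definition xvar := (V + avar)%type.

Definition in_UEA (Phi : dqbf) (A : {set avar}) (x : xvar) : bool :=
  match x with inl v => v \in univ Phi :|: exist Phi | inr a => a \in A end.
Definition in_UA (Phi : dqbf) (A : {set avar}) (x : xvar) : bool :=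
  match x with inl v => v \in univ Phi | inr a => a \in A end.
Definition in_DA (Phi : dqbf) (A : {set avar}) (e : V) (x : xvar) : bool :=
  match x with inl v => v \in dep Phi e | inr a => a \in A end.

(* Partial assignments (identified with terms: x |-> Some b means the
   literal (x,b) is in the term). *)
Definition passign := {ffun xvar -> option bool}.
Definition partial_on (s : passign) (P : xvar -> bool) : Prop :=
  forall x, s x != None -> P x.
Definition restrict (s : passign) (W : xvar -> bool) : passign :=
  [ffun x => if W x then s x else None].
Definition agrees (al : xvar -> bool) (s : passign) : Prop :=
  forall x b, s x = Some b -> al x = b.

Definition forced (psi : cnf xvar) (s : passign) (l : lit xvar) : Prop :=
  forall al : xvar -> bool, cnf_sat al psi -> agrees al s -> lit_sat al l.

Definition forcing_clause (Phi : dqbf) (A : {set avar}) (psi : cnf xvar)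
    (p : passign) (e : V) (b : bool) : Prop :=
  exists s : passign,
    partial_on s (in_UA Phi A) /\ forced psi s (inl e, b) /\
    p = restrict s (in_DA Phi A e).

(* Model of  Q exists A(emptyset). psi :
   Fe e applied to tau \subset D(e) (the assignment in [D(e)] making exactly
   tau true) is the model function of e in E;  Fa a is the (constant) model
   function of the arbiter a, whose dependency set is empty.
   For each universal assignment sg (only its values on U are used),
   sg \cup F(sg) must satisfy psi. *)
Definition ext_assign (Phi : dqbf) (sg : V -> bool)
    (Fe : V -> {set V} -> bool) (Fa : avar -> bool) (x : xvar) : bool :=
  match x with
  | inl v => if v \in univ Phi then sg v else Fe v [set w in dep Phi v | sg w]
  | inr a => Fa a
  end.

Definition is_ext_model (Phi : dqbf) (psi : cnf xvar)
    (Fe : V -> {set V} -> bool) (Fa : avar -> bool) : Prop :=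
  forall sg : V -> bool, cnf_sat (ext_assign Phi sg Fe Fa) psi.

End DQBF.

From mathcomp Require Import all_boot.

(* Let the forcing clause come from the forced term s, so that p is s restricted
   to D(e) and A.  Given a model F violating the claim with witness tau, extend
   tau to a universal assignment that follows s on the rest of U.  Together with
   F this total assignment satisfies psi and agrees with s on U and on the
   arbiters, hence with all of s; so it satisfies l, although its value at e is
   F_e(tau), which falsifies l. *)

Set Implicit Arguments.
Unset Strict Implicit.
Unset Printing Implicit Defensive.

Section ForcingClause.

Variable V : finType.

Lemma restrictE_in (s : passign V) (W : xvar V -> bool) (x : xvar V) :
  W x -> restrict s W x = s x.
Proof. by rewrite ffunE => ->. Qed.

Lemma partial_on_dom (s : passign V) (W : xvar V -> bool) (x : xvar V) (c : bool) :
  partial_on s W -> s x = Some c -> W x.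
Proof. by move=> sW sx; apply: sW; rewrite sx. Qed.

Definition dep_assign (D tau : {set V}) (s : passign V) (w : V) : bool :=
  if w \in D then w \in tau else odflt false (s (inl w)).

Lemma dep_assign_restr (D tau : {set V}) (s : passign V) :
  tau \subset D -> [set w in D | dep_assign D tau s w] = tau.
Proof.
move=> tauD; apply/setP => w; rewrite inE /dep_assign.
case: (boolP (w \in D)) => //= wD.
by apply/esym/negbTE; apply: contra wD; apply: (subsetP tauD).
Qed.

Lemma dep_assign_agrees (D tau : {set V}) (s : passign V) (u : V) (c : bool) :
  (forall u c, u \in D -> s (inl u) = Some c -> (u \in tau) = c) ->
  s (inl u) = Some c -> dep_assign D tau s u = c.
Proof.
move=> tau_s su; rewrite /dep_assign.
by case: ifP => [uD | _]; [apply: tau_s | rewrite su].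
Qed.

Variables (Phi : dqbf V) (A : {set avar V}).

Lemma agrees_ext_assign (s : passign V) (sg : V -> bool)
    (Fe : V -> {set V} -> bool) (Fa : avar V -> bool) :
  partial_on s (in_UA Phi A) ->
  (forall u c, s (inl u) = Some c -> sg u = c) ->
  (forall a c, s (inr a) = Some c -> Fa a = c) ->
  agrees (ext_assign Phi sg Fe Fa) s.
Proof.
move=> sUA sg_s Fa_s [v|a] c sx //=; last exact: Fa_s.
have /= -> := partial_on_dom sUA sx; exact: sg_s.
Qed.

End ForcingClause.

Theorem lemma8 (V : finType) (Phi : dqbf V) (A : {set avar V})
    (psi : cnf (xvar V)) (p : passign V) (e : V) (b : bool) :
  dqbf_wf Phi ->
  arbiters_of Phi A ->
  cnf_vars_in psi (in_UEA Phi A) ->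
  e \in exist Phi ->
  forcing_clause Phi A psi p e b ->
  ~ (exists (Fe : V -> {set V} -> bool) (Fa : avar V -> bool),
       is_ext_model Phi psi Fe Fa /\
       (forall a c, p (inr a) = Some c -> Fa a = c) /\
       (exists tau : {set V},
          tau \subset dep Phi e /\
          (forall u c, u \in univ Phi -> p (inl u) = Some c -> (u \in tau) = c) /\
          Fe e tau = ~~ b)).
Proof.
move=> [UE_disj _] _ _ eE [s [sUA [s_forces ->]]].
move=> [Fe [Fa [model [Fa_p [tau [tauD [tau_p Fe_tau]]]]]]].
set sg := dep_assign (dep Phi e) tau s.
have agr : agrees (ext_assign Phi sg Fe Fa) s.
  apply: (agrees_ext_assign (A := A)) => // [u c su | a c sa].
  - apply: dep_assign_agrees su => {}u {}c uD {}su.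
    apply: tau_p; first exact: (partial_on_dom sUA su).
    by rewrite restrictE_in.
  - by apply: Fa_p; rewrite restrictE_in //; apply: (partial_on_dom sUA sa).
have := s_forces _ (model sg) agr.
by rewrite /lit_sat /= (disjointFl UE_disj eE) dep_assign_restr // Fe_tau; case: (b).
Qed.
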